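(* Let $h$ and $k$ be odd positive integers with $\gcd(h,k)=1$. Then $$kB_{1}(h,k)+hB_{1}(k,h)=\frac{1}{2}(h-1)(k-1).$$
   Context: $[x]$ denotes the greatest integer $\le x$. For integers $a,b$ with $b>0$ and $\gcd(a,b)=1$, define $$B_{1}(a,b)=\sum_{j=1}^{b-1}(-1)^{j+\left[\frac{aj}{b}\right]}\left[\frac{aj}{b}\right].$$ *)

From mathcomp Require Import all_boot all_order all_algebra.
Set Implicit Arguments. Unset Strict Implicit. Unset Printing Implicit Defensive.
Import Order.TTheory GRing.Theory Num.Theory.
Local Open Scope ring_scope.

(* B_1(a,b) = sum_{j=1}^{b-1} (-1)^(j + [aj/b]) [aj/b], for integers a, b > 0.
   [x] is the floor; for b > 0, floor(aj/b) = (a*j %/ b)%Z (intdiv rounds down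
   for positive divisor). *)
Definition B1 (a : int) (b : nat) : int :=
  \sum_(1 <= j < b)
    let q := ((a * j%:Z) %/ b%:Z)%Z in (-1) ^+ (j + `|q|)%N * q.

From mathcomp Require Import all_boot all_order all_algebra.
From mathcomp Require Import zify ring.
Import GRing.Theory Num.Theory.
Local Open Scope ring_scope.

(* Put F(m) = (-1)^([m/h] + [m/k]).  As h and k are odd, F(m) = (-1)^(m mod h + m mod k),
   so summing over the residues gives \sum_{0 <= m < hk} F(m) = 1.  Below hk, F changes sign
   exactly at the multiples of h and of k (no m is both), so Abel summation of
   \sum_m m (F(m) - F(m-1)) yields hk - 1 = 2 \sum_{h | m} m F(m) + 2 \sum_{k | m} m F(m).
   Writing m = jh = k [jh/k] + (jh mod k), the first sum is k B_1(h,k) plus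
   \sum_{r < k} (-1)^r r = (k-1)/2, as jh mod k runs over all residues; symmetrically
   for the second. *)

Lemma eqn_modMl_coprime k d x y : coprime k d ->
  (k * x == k * y %[mod d])%N = (x == y %[mod d])%N.
Proof.
move=> cop; wlog le_xy : x y / (x <= y)%N.
  move=> sym; case/orP: (leq_total x y) => /sym //.
  by rewrite eq_sym [in RHS]eq_sym.
rewrite eq_sym [RHS]eq_sym !eqn_mod_dvd ?leq_mul2l ?le_xy ?orbT //.
by rewrite -mulnBr Gauss_dvdr // coprime_sym.
Qed.

Lemma sum_mod_affine (R : nmodType) (g : nat -> R) d k b : coprime k d ->
  \sum_(0 <= u < d) g ((u * k + b) %% d)%N = \sum_(0 <= r < d) g r.
Proof.
case: d => [|d] cop; first by rewrite !big_geq.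
pose f (u : 'I_d.+1) := Ordinal (ltn_pmod (u * k + b) (ltn0Sn d)).
have f_inj : injective f.
  move=> u v /(congr1 val)/eqP; rewrite /= eqn_modDr mulnC [(v * k)%N]mulnC.
  by rewrite eqn_modMl_coprime // !modn_small ?ltn_ord // => /eqP/val_inj.
by rewrite !big_mkord [RHS](reindex_inj f_inj).
Qed.

Lemma sum_signr (R : pzRingType) n :
  \sum_(0 <= r < n) (-1) ^+ r = (odd n)%:R :> R.
Proof.
elim: n => [|n IHn]; first by rewrite big_geq.
rewrite big_nat_recr //= IHn -signr_odd.
by case: (odd n); rewrite /= ?expr0 ?expr1 ?addrN ?add0r.
Qed.

Lemma sum_signr_mulr (R : comPzRingType) n :
  \sum_(0 <= r < n) (-1) ^+ r * r%:R = (-1) ^+ n.+1 * (n./2)%:R :> R.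
Proof.
elim: n => [|n IHn]; first by rewrite big_geq // mulr0.
rewrite big_nat_recr //= IHn.
have -> : n%:R = (n./2)%:R + (uphalf n)%:R :> R.
  by rewrite -natrD uphalf_half addnCA addnn odd_double_half.
by rewrite !exprS; ring.
Qed.

Lemma sum_nat_blocks (R : nmodType) (f : nat -> R) n a :
  \sum_(0 <= m < a * n) f m = \sum_(0 <= u < a) \sum_(0 <= b < n) f (u * n + b)%N.
Proof.
rewrite big_nat_mul; apply: eq_bigr => u _.
rewrite -{1}[(u * n)%N]add0n big_addn mulSn addnK.
by apply: eq_bigr => b _; rewrite addnC.
Qed.

Lemma odd_divn d m : odd d -> odd (m %/ d) = odd m (+) odd (m %% d).
Proof. by move=> odd_d; rewrite {2}(divn_eq m d) oddD oddM odd_d andbT addbK. Qed.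

Lemma modn_predMl d n : (0 < n)%N -> ((d * n).-1 %% d)%N = d.-1.
Proof.
case: d => [|d] //; case: n => [|n] // _.
have -> : (d.+1 * n.+1).-1 = n * d.+1 + d by nia.
by rewrite modnMDl modn_small.
Qed.

Lemma sum_dvdn_weight (R : pzRingType) (f : nat -> R) d n : (0 < d)%N ->
  \sum_(0 <= m < n * d) f m * (d %| m)%:R = \sum_(0 <= j < n) f (j * d)%N.
Proof.
move=> d_gt0; rewrite sum_nat_blocks; apply: eq_big_nat => j _.
rewrite big_ltn // addn0 dvdn_mull // mulr1 big_nat_cond big1 ?addr0 //.
move=> b /andP[/andP[b_gt0 b_lt] _].
by rewrite dvdn_addr ?dvdn_mull // gtnNdvd // mulr0.
Qed.

Lemma summation_by_parts (R : comPzRingType) (G : nat -> R) n :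
  \sum_(0 <= m < n) m%:R * (G m - G m.-1) = n%:R * G n.-1 - \sum_(0 <= m < n) G m.
Proof.
elim: n => [|n IHn]; first by rewrite !big_geq // mul0r subr0.
by rewrite !big_nat_recr //= IHn mulrS; case: n {IHn} => [|n] /=; ring.
Qed.

Definition floor_sign (h k m : nat) : int := (-1) ^+ (m %/ h + m %/ k).

Lemma floor_signC h k m : floor_sign h k m = floor_sign k h m.
Proof. by rewrite /floor_sign addnC. Qed.

Lemma floor_sign_mod h k m : odd h -> odd k ->
  floor_sign h k m = (-1) ^+ (m %% h + m %% k).
Proof.
move=> odd_h odd_k; rewrite /floor_sign -signr_odd -[RHS]signr_odd !oddD.
by rewrite !odd_divn //; case: (odd m); rewrite ?addTb ?addbN ?addNb ?negbK.
Qed.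

Section FloorSign.
Variables h k : nat.
Hypotheses (odd_h : odd h) (odd_k : odd k) (cop_hk : coprime h k).

Lemma sum_floor_sign : \sum_(0 <= m < h * k) floor_sign h k m = 1.
Proof.
rewrite sum_nat_blocks exchange_big_nat /=.
transitivity (\sum_(0 <= b < k) (-1) ^+ b : int); last by rewrite sum_signr odd_k.
apply: eq_big_nat => b /andP[_ lt_bk].
under eq_big_nat => u _ do rewrite floor_sign_mod // modnMDl (modn_small lt_bk) exprD.
by rewrite -big_distrl /= sum_mod_affine 1?coprime_sym // sum_signr odd_h mul1r.
Qed.

Lemma floor_sign_last : floor_sign h k (h * k).-1 = 1.
Proof.
have [h_gt0 k_gt0] := (odd_gt0 odd_h, odd_gt0 odd_k).
rewrite floor_sign_mod // modn_predMl // mulnC modn_predMl // -signr_odd oddD.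
by rewrite -!subn1 !oddB ?odd_h ?odd_k.
Qed.

Lemma floor_sign_jump m : (0 < m < h * k)%N ->
  floor_sign h k m - floor_sign h k m.-1 =
    2 * floor_sign h k m * ((h %| m) + (k %| m))%N%:Z.
Proof.
have [h_gt0 k_gt0] := (odd_gt0 odd_h, odd_gt0 odd_k).
case: m => [//|m] /andP[_ lt_mN].
have not_both : ~~ ((h %| m.+1) && (k %| m.+1))%N.
  by rewrite -Gauss_dvd // gtnNdvd.
rewrite /floor_sign /= !divnS //.
move: not_both; case: (h %| m.+1)%N; case: (k %| m.+1)%N => //= _.
- by rewrite add0n add1n addSn exprS; lia.
- by rewrite !add0n add1n addnS exprS; lia.
- by rewrite !add0n; lia.
Qed.

End FloorSign.

Lemma B1_natE h k : B1 h%:Z k =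
  \sum_(0 <= j < k) (-1) ^+ (j + h * j %/ k)%N * ((h * j) %/ k)%N%:Z.
Proof.
case: k => [|k]; first by rewrite /B1 !big_geq.
rewrite /B1 [RHS]big_ltn // muln0 div0n mulr0 add0r.
by apply: eq_big_nat => j _; rewrite -PoszM divz_nat.
Qed.

Section Multiples.
Variables h k : nat.
Hypotheses (odd_h : odd h) (odd_k : odd k) (cop_hk : coprime h k).

Lemma sum_signed_residues :
  \sum_(0 <= j < k) (-1) ^+ (j * h %% k) * (j * h %% k)%N%:Z = (k./2)%:Z.
Proof.
have := @sum_mod_affine _ (fun r => (-1) ^+ r * r%:R : int) k h 0 cop_hk.
rewrite sum_signr_mulr -signr_odd /= odd_k mul1r natz => <-.
by apply: eq_big_nat => j _; rewrite addn0 natz.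
Qed.

Lemma sum_multiples_floor_sign :
  \sum_(0 <= j < k) (j * h)%N%:Z * floor_sign h k (j * h)
    = k%:Z * B1 h%:Z k + (k./2)%:Z.
Proof.
have h_gt0 := odd_gt0 odd_h.
rewrite B1_natE big_distrr /= -sum_signed_residues -big_split /=.
apply: eq_big_nat => j _.
rewrite {1}(divn_eq (j * h) k) PoszD mulrDl; congr (_ + _).
  by rewrite /floor_sign mulnK // [(h * j)%N]mulnC PoszM; ring.
by rewrite floor_sign_mod // modnMl add0n mulrC.
Qed.

End Multiples.

Lemma B1_reciprocity h k : odd h -> odd k -> coprime h k ->
  2 * (k%:Z * B1 h%:Z k + h%:Z * B1 k%:Z h) = (h%:Z - 1) * (k%:Z - 1).
Proof.
move=> odd_h odd_k cop_hk.
have cop_kh : coprime k h by rewrite coprime_sym.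
have [h_gt0 k_gt0] := (odd_gt0 odd_h, odd_gt0 odd_k).
have hk_gt0 : (0 < h * k)%N by rewrite muln_gt0 h_gt0.
have parts := @summation_by_parts _ (floor_sign h k) (h * k).
rewrite floor_sign_last // sum_floor_sign // mulr1 in parts.
have jumps : \sum_(0 <= m < h * k) m%:R * (floor_sign h k m - floor_sign h k m.-1)
    = 2 * (\sum_(0 <= j < k) (j * h)%N%:Z * floor_sign h k (j * h)
           + \sum_(0 <= j < h) (j * k)%N%:Z * floor_sign k h (j * k)).
  under eq_big_nat => m /andP[_ lt_mN].
    have -> : m%:R * (floor_sign h k m - floor_sign h k m.-1) =
        2 * ((m%:Z * floor_sign h k m) * (h %| m)%N%:R
             + (m%:Z * floor_sign h k m) * (k %| m)%N%:R).
      case: m lt_mN => [|m] lt_mN; first by rewrite !mul0r mulr0.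
      by rewrite floor_sign_jump // PoszD !natz; ring.
    over.
  rewrite -mulr_sumr big_split /= sum_dvdn_weight // mulnC sum_dvdn_weight //.
  by under [in X in _ + X]eq_big_nat => j _ do rewrite floor_signC.
rewrite jumps !sum_multiples_floor_sign // in parts.
have half_h : (2 * h./2 = h - 1)%N by rewrite mul2n halfK odd_h.
have half_k : (2 * k./2 = k - 1)%N by rewrite mul2n halfK odd_k.
rewrite natz in parts.
move: (k%:Z * _) (h%:Z * _) parts => X Y parts; nia.
Qed.

Theorem theorem15 (h k : nat) :
  (0 < h)%N -> (0 < k)%N -> odd h -> odd k -> coprime h k ->
  ((k%:Z * B1 h%:Z k + h%:Z * B1 k%:Z h)%:~R : rat)
    = 1 / 2 * ((h%:R - 1) * (k%:R - 1)).
Proof.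
move=> _ _ odd_h odd_k cop_hk.
have /(congr1 (fun z : int => z%:~R : rat)) := B1_reciprocity h k odd_h odd_k cop_hk.
move=> E; rewrite !intrM !intrB in E.
by rewrite -E; field.
Qed.
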